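(* Let $X$ be a finite set and let $c$ be a choice correspondence on $X$. If $c$ is rational, then $r^{c}(A)=c(A)$ for every menu $A$.
   Context: A menu is a nonempty subset of $X$. A choice correspondence is a map $c$ assigning to each menu $A$ a nonempty subset $c(A)\subseteq A$. A weak order is a complete and transitive binary relation on $X$. For a weak order $R$ and menu $A$, $\max(A,R)=\{x\in A: xRy \text{ for all } y\in A\}$. The choice correspondence $c$ is rational if there exists a weak order $R$ on $X$ with $c(A)=\max(A,R)$ for every menu $A$. For a menu $A$, $r^{c}(A)=\{x\in A: c(A\setminus\{x\})\neq c(A)\}$ (with the convention that for a singleton $A=\{x\}$ the removal of $x$ counts as changing the choice, so $r^c(\{x\})=\{x\}$; in particular $c(A)\subseteq r^c(A)$ always). *)

From mathcomp Require Import all_boot.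
Set Implicit Arguments. Unset Strict Implicit. Unset Printing Implicit Defensive.

Definition choice_corr (X : finType) (c : {set X} -> {set X}) : Prop :=
  forall A : {set X}, A != set0 -> (c A \subset A) /\ (c A != set0).

Definition weak_order (X : finType) (R : rel X) : Prop :=
  (forall x y, R x y || R y x) /\ transitive R.

Definition maxR (X : finType) (A : {set X}) (R : rel X) : {set X} :=
  [set x in A | [forall y in A, R x y]].

Definition rational (X : finType) (c : {set X} -> {set X}) : Prop :=
  exists R : rel X, weak_order R /\
    forall A : {set X}, A != set0 -> c A = maxR A R.

(* r^c(A): elements whose removal changes the choice; removing the
   element of a singleton menu counts as a change. *)
Definition rc (X : finType) (c : {set X} -> {set X}) (A : {set X}) : {set X} :=
  [set x in A | (A :\ x == set0) || (c (A :\ x) != c A)].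

From mathcomp Require Import all_boot.

Set Implicit Arguments.
Unset Strict Implicit.
Unset Printing Implicit Defensive.

(* Removing an element [x] of [A] from the menu cannot leave [x] chosen, so
   it changes [max(A, R)] when [x] is maximal.  When [x] is not maximal, some
   maximal [z <> x] survives and every [y] that beats all of [A :\ x] also
   beats [x] through [z]; hence [max(A, R)] is unchanged.  Singleton menus
   are handled by the choice axioms alone. *)

Section MaxRemove.

Variables (X : finType) (R : rel X).
Hypothesis R_trans : transitive R.

Lemma maxR_setD1_notin (A : {set X}) (x z : X) :
  z \in maxR A R -> x \notin maxR A R -> maxR (A :\ x) R = maxR A R.
Proof.
rewrite !inE => /andP[zA /forallP zmax] xNmax.
apply/setP => y; rewrite !inE.
have [->|yx] /= := eqVneq y x; first by rewrite (negbTE xNmax).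
case: (y \in A) => //=.
apply/forallP/forallP => ymax w.
- have [->|wx] := eqVneq w x; last by have := ymax w; rewrite !inE wx.
  apply/implyP => xA.
  have zx : z != x by apply: contraNneq xNmax => <-; rewrite zA; apply/forallP.
  have Ryz : R y z by have := ymax z; rewrite !inE zx zA.
  by apply: R_trans Ryz _; have := zmax x; rewrite xA.
- by apply/implyP; rewrite !inE => /andP[_ wA]; have := ymax w; rewrite wA.
Qed.

Lemma maxR_setD1_neq (A : {set X}) (x : X) :
  maxR A R != set0 -> (maxR (A :\ x) R != maxR A R) = (x \in maxR A R).
Proof.
move=> /set0Pn[z zmax].
have [xmax|xNmax] := boolP (x \in maxR A R); last first.
  by rewrite (maxR_setD1_notin zmax xNmax) eqxx.
by apply: contraTneq xmax => <-; rewrite inE setD11.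
Qed.

End MaxRemove.

Lemma choice_corr_set1 (X : finType) (c : {set X} -> {set X}) (x : X) :
  choice_corr c -> c [set x] = [set x].
Proof.
move=> hc.
have /hc[sub nonempty] : [set x] != set0 by apply/set0Pn; exists x; rewrite set11.
by move: sub; rewrite subset1 (negbTE nonempty) orbF => /eqP.
Qed.

Theorem lemma3 (X : finType) (c : {set X} -> {set X}) :
  choice_corr c -> rational c ->
  forall A : {set X}, A != set0 -> rc c A = c A.
Proof.
move=> hc [R [[_ R_trans] hR]] A hA.
have [cA_sub cA_nonempty] := hc A hA.
apply/setP => x; rewrite inE.
have [xA|xNA] /= := boolP (x \in A); last first.
  by apply/esym/negbTE; apply: contra xNA; apply: (subsetP cA_sub).
have [Ax0|Ax] /= := eqVneq (A :\ x) set0.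
  have A1 : A = [set x] by rewrite -(setD1K xA) Ax0 setU0.
  by rewrite A1 choice_corr_set1 // set11.
by rewrite (hR _ Ax) (hR _ hA) maxR_setD1_neq // -(hR _ hA).
Qed.
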